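(* Consider the $d$-level Nested Logit model and the experiment design $\mathcal{S}$ described in the context, and suppose the $d$-level general position assumption (described in the context) holds. Let $S \in \mathcal{S}$ and $i,j \in S$. Then: (I) if $j$ is a child of $N^{\mathrm{par}}(i)$, then $\mathsf{BF}(i,S) = \mathsf{BF}(j,S)$; (II) if $j$ is not a child of $N^{\mathrm{par}}(i)$ and there exists a child $k$ of $N^{\mathrm{par}}(i)$ with $k \notin S$, then $\mathsf{BF}(i,S) \neq \mathsf{BF}(j,S)$.
   Context: Items: $[n]=\{1,\dots,n\}$, $n \ge 2$. Experiment design: fix an integer base $b \ge 2$, let $L = \lceil \log_b n \rceil$, fix an injective map $\sigma: [n] \to \{0,\dots,b-1\}^L$ with coordinates $\sigma_\ell(i)$, let $S_{\ell,-d} = \{i \in [n] : \sigma_\ell(i) \neq d\}$ for $\ell \in \{1,\dots,L\}$, $d \in \{0,\dots,b-1\}$, and $\mathcal{S} = \{S_{\ell,-d}\}_{\ell,d}$; the control assortment $[n]$ is also offered. $d$-level Nested Logit model: the items are the leaves of a rooted tree $\mathcal{T}$ of depth $d \ge 1$ in which every leaf is at depth $d$; internal nodes are called nests. For each item $i$, $r = a_0(i) \to a_1(i) \to \cdots \to a_d(i) = i$ is the root-to-leaf path, and $N^{\mathrm{par}}(i) = a_{d-1}(i)$ is the parent of $i$. For a node $N$, $\mathrm{Ch}(N)$ is its set of children and $\mathrm{Leaf}(N)$ the set of leaves in its subtree; for an assortment $S$ we write $N \cap S$ for $\mathrm{Leaf}(N) \cap S$. Each item has a weight $v_i > 0$ and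 each internal node $N$ a parameter $\lambda_N \in (0,1]$. For $S \subseteq [n]$: $v_i(S) = v_i$ if $i \in S$ and $0$ otherwise; for internal $N$, $v_N(S) = (\sum_{K \in \mathrm{Ch}(N)} v_K(S))^{\lambda_N}$; for $K \in \mathrm{Ch}(N)$, $P(K \mid N, S) = v_K(S)/\sum_{L' \in \mathrm{Ch}(N)} v_{L'}(S)$; and $\phi(i,S) = \prod_{h=0}^{d-1} P(a_{h+1}(i) \mid a_h(i), S)$ for $i \in S$. For a node $N$, $P(N \mid S) = \sum_{i \in \mathrm{Leaf}(N) \cap S} \phi(i,S)$. Boost factor: $\mathsf{BF}(i,S) = \phi(i,S)/\phi(i,[n])$. $d$-level general position assumption: for every $S \in \mathcal{S}$ and any two distinct internal nodes $N \neq N'$ with $N \cap S \neq \emptyset$ and $N' \cap S \neq \emptyset$, and such that $N \cap S \subsetneq \mathrm{Leaf}(N)$ or $N' \cap S \subsetneq \mathrm{Leaf}(N')$, we have $\frac{P(N \mid S)}{P(N \mid [n])} \cdot \frac{\sum_{K \in \mathrm{Ch}(N)} v_K([n])}{\sum_{K \in \mathrm{Ch}(N)} v_K(S)} \neq \frac{P(N' \mid S)}{P(N' \mid [n])} \cdot \frac{\sum_{K \in \mathrm{Ch}(N')} v_K([n])}{\sum_{K \in \mathrm{Ch}(N')} v_K(S)}$. *)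

From HB Require Import structures.
From mathcomp Require Import all_boot all_order all_algebra.
From mathcomp Require Import reals exp.
Set Implicit Arguments. Unset Strict Implicit. Unset Printing Implicit Defensive.
Import Order.TTheory GRing.Theory Num.Theory.
Local Open Scope ring_scope.

(* A d-level nested logit model on items 'I_n (item k stands for k+1).
   The tree is encoded level-wise: [nl_blk h i] is Leaf(a_h(i)), the set of
   leaves below the depth-h ancestor of item i.  A node of the tree is the
   pair (h, B) of its depth h and its leaf set B = nl_blk h i. *)
Record nlmodel (R : realType) (n : nat) := NLModel {
  nl_d   : nat;
  nl_blk : nat -> 'I_n -> {set 'I_n};
  nl_v   : 'I_n -> R;
  nl_lam : nat -> {set 'I_n} -> R
}.

Section NL.
Variables (R : realType) (n : nat) (M : nlmodel R n).
Local Notation d := (nl_d M).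
Local Notation blk := (nl_blk M).
Local Notation v := (nl_v M).
Local Notation lam := (nl_lam M).

Definition nl_valid : Prop :=
  [/\ (0 < d)%N,
      (forall h i, (h <= d)%N -> i \in blk h i),
      (forall h i j, (h <= d)%N -> j \in blk h i -> blk h j = blk h i)
    & (forall h i, (h < d)%N -> blk h.+1 i \subset blk h i)] /\
  [/\ (forall i, blk 0 i = setT),
      (forall i, blk d i = [set i]),
      (forall i, 0 < v i)
    & (forall h i, (h < d)%N -> 0 < lam h (blk h i) <= 1)].

Definition is_internal (h : nat) (B : {set 'I_n}) : bool :=
  (h < d)%N && [exists i, blk h i == B].

Definition children (h : nat) (B : {set 'I_n}) : {set {set 'I_n}} :=
  [set blk h.+1 j | j in B].

Definition vleaf (i : 'I_n) (S : {set 'I_n}) : R := if i \in S then v i else 0.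

(* v_N(S) for the node N = (h, B), computed by recursion on m = d - h;
   at a leaf B = [set i], so the sum is v_i(S). *)
Fixpoint vnode (m h : nat) (B : {set 'I_n}) (S : {set 'I_n}) : R :=
  match m with
  | 0 => \sum_(i in B) vleaf i S
  | m'.+1 => (\sum_(C in children h B) vnode m' h.+1 C S) `^ (lam h B)
  end.

Definition vN (h : nat) (B S : {set 'I_n}) : R := vnode (d - h) h B S.

Definition chsum (h : nat) (B S : {set 'I_n}) : R :=
  \sum_(C in children h B) vN h.+1 C S.

(* phi(i, S) = prod_{h<d} P(a_{h+1}(i) | a_h(i), S) *)
Definition phi (i : 'I_n) (S : {set 'I_n}) : R :=
  \prod_(h < d) (vN h.+1 (blk h.+1 i) S / chsum h (blk h i) S).

Definition PN (h : nat) (B S : {set 'I_n}) : R := \sum_(i in B :&: S) phi i S.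

Definition BF (i : 'I_n) (S : {set 'I_n}) : R := phi i S / phi i setT.

Definition gp_ratio (h : nat) (B S : {set 'I_n}) : R :=
  PN h B S / PN h B setT * (chsum h B setT / chsum h B S).

Definition general_position (design : {set {set 'I_n}}) : Prop :=
  forall S, S \in design ->
  forall h B h' B', is_internal h B -> is_internal h' B' ->
    (h, B) <> (h', B') ->
    B :&: S != set0 -> B' :&: S != set0 ->
    (B :&: S \proper B) || (B' :&: S \proper B') ->
    gp_ratio h B S != gp_ratio h' B' S.

End NL.

(* Experiment design: base b, L = ceil(log_b n) = up_log b n, an injective
   sigma : [n] -> {0..b-1}^L; S_{l,-dd} = {i | sigma_l(i) <> dd}. *)
Definition S_design (n b : nat) (sigma : 'I_n -> {ffun 'I_(up_log b n) -> 'I_b})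
  (l : 'I_(up_log b n)) (dd : 'I_b) : {set 'I_n} :=
  [set i | sigma i l != dd].

Definition design (n b : nat) (sigma : 'I_n -> {ffun 'I_(up_log b n) -> 'I_b})
  : {set {set 'I_n}} :=
  [set S_design sigma l dd | l : 'I_(up_log b n), dd : 'I_b].

(** For the parent nest [N := N^par(i)] of an item [i], the factor of
    [phi i S] contributed by the last level is [v_i / sum_{k in N cap S} v_k],
    while the product of the upper factors is the same for all children of [N].
    Summing [phi k S] over [k in N cap S] therefore gives [P(N | S)] equal to
    that upper product, and [BF i S] equals the general-position ratio of [N].
    So siblings have equal boost factors, and when [N] is cut by [S], items with
    different parents have different boost factors by general position. *)

From HB Require Import structures.
From mathcomp Require Import all_boot all_order all_algebra.
From mathcomp Require Import reals exp.
From mathcomp Require Import ring.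
Import Order.TTheory GRing.Theory Num.Theory.
Local Open Scope ring_scope.

Section NestedLogitBoostFactor.
Set Implicit Arguments. Unset Strict Implicit.
Variables (R : realType) (n : nat) (M : nlmodel R n).
Hypothesis M_valid : nl_valid M.
Local Notation d := (nl_d M).
Local Notation blk := (nl_blk M).
Local Notation par i := (blk d.-1 i).

Lemma depth_gt0 : (0 < d)%N.
Proof. by case: M_valid => [[]]. Qed.

Lemma mem_blk h i : (h <= d)%N -> i \in blk h i.
Proof. by case: M_valid => [[_ blk_refl _ _] _]; apply: blk_refl. Qed.

Lemma blk_eq_of_mem h i j : (h <= d)%N -> j \in blk h i -> blk h j = blk h i.
Proof. by case: M_valid => [[_ _ blkE _] _]; apply: blkE. Qed.

Lemma blk_leaf i : blk d i = [set i].
Proof. by case: M_valid => _ [_ blk_d _ _]; apply: blk_d. Qed.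

Lemma weight_gt0 i : 0 < nl_v M i.
Proof. by case: M_valid => _ [_ _ v_gt0 _]; apply: v_gt0. Qed.

Lemma blk_subset g h i : (g <= h)%N -> (h <= d)%N -> blk h i \subset blk g i.
Proof.
case: M_valid => [[_ _ _ blkS] _]; elim: h => [|h IH].
  by rewrite leqn0 => /eqP ->.
rewrite leq_eqVlt => /orP[/eqP -> // | ltgh] ltd.
exact: subset_trans (blkS h i ltd) (IH ltgh (ltnW ltd)).
Qed.

Lemma mem_par i : i \in par i.
Proof. exact/mem_blk/leq_pred. Qed.

Lemma par_eq_of_mem i j : j \in par i -> par j = par i.
Proof. exact/blk_eq_of_mem/leq_pred. Qed.

Lemma ancestor_eq_of_mem_par i j g :
  j \in par i -> (g <= d.-1)%N -> blk g j = blk g i.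
Proof.
move=> jNi leg; apply: blk_eq_of_mem; first exact: leq_trans leg (leq_pred _).
exact: subsetP (blk_subset i leg (leq_pred _)) j jNi.
Qed.

Lemma par_internal i : is_internal M d.-1 (par i).
Proof.
by rewrite /is_internal prednK ?depth_gt0 // leqnn; apply/existsP; exists i.
Qed.

(* The probability of reaching [N^par(i)]: the first [d - 1] factors of [phi]. *)
Definition phi_par (i : 'I_n) (S : {set 'I_n}) : R :=
  \prod_(h < d.-1) (vN M h.+1 (blk h.+1 i) S / chsum M h (blk h i) S).

Lemma phi_par_eq_of_mem i j S : j \in par i -> phi_par j S = phi_par i S.
Proof.
move=> jNi; apply: eq_bigr => h _.
by rewrite !(ancestor_eq_of_mem_par jNi) // ltnW.
Qed.

Lemma vN_leaf i S : vN M d (blk d i) S = vleaf M i S.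
Proof. by rewrite /vN subnn /= blk_leaf big_set1. Qed.

Lemma chsum_par i S : chsum M d.-1 (par i) S = \sum_(k in par i) vleaf M k S.
Proof.
rewrite /chsum /children prednK ?depth_gt0 //.
rewrite (eq_imset _ blk_leaf) big_imset; last by move=> x y _ _ /set1_inj.
by apply: eq_bigr => k _; rewrite -blk_leaf vN_leaf.
Qed.

Lemma chsum_par_gt0 i (S : {set 'I_n}) : i \in S -> 0 < chsum M d.-1 (par i) S.
Proof.
move=> iS; rewrite chsum_par (bigD1 i) ?mem_par //= {1}/vleaf iS.
rewrite ltr_pwDl ?weight_gt0 // sumr_ge0 // => k _.
by rewrite /vleaf; case: ifP => // _; apply/ltW/weight_gt0.
Qed.

Lemma phi_par_split i S :
  phi M i S = phi_par i S * (vleaf M i S / chsum M d.-1 (par i) S).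
Proof.
rewrite /phi /phi_par -vN_leaf.
by case: d depth_gt0 => // d' _; rewrite big_ord_recr.
Qed.

Lemma PN_par i (S : {set 'I_n}) : i \in S -> PN M d.-1 (par i) S = phi_par i S.
Proof.
move=> iS; set X := chsum M d.-1 (par i) S.
have sum_vleaf : \sum_(k in par i :&: S) vleaf M k S = X.
  rewrite /X chsum_par [RHS](big_setID S) /= [X in _ = _ + X]big1 ?addr0 //.
  by move=> k; rewrite in_setD => /andP[kS _]; rewrite /vleaf (negbTE kS).
rewrite /PN (eq_bigr (fun k => phi_par i S * (vleaf M k S / X))); last first.
  move=> k; rewrite in_setI => /andP[kNi _].
  by rewrite phi_par_split (phi_par_eq_of_mem _ kNi) (par_eq_of_mem kNi).
rewrite -big_distrr -big_distrl /= sum_vleaf divff ?mulr1 //.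
by rewrite gt_eqF // chsum_par_gt0.
Qed.

Lemma BF_gp_ratio_par i (S : {set 'I_n}) :
  i \in S -> BF M i S = gp_ratio M d.-1 (par i) S.
Proof.
move=> iS; rewrite /BF /gp_ratio !PN_par ?inE // !phi_par_split /vleaf iS inE.
have XS := chsum_par_gt0 iS; have XT := chsum_par_gt0 (in_setT i).
have v0 := weight_gt0 i.
have [->|b0] := eqVneq (phi_par i setT) 0; first by rewrite !mul0r invr0 !mulr0 mul0r.
by field; rewrite b0 !gt_eqF.
Qed.

Lemma BF_eq_siblings i j (S : {set 'I_n}) :
  i \in S -> j \in S -> j \in par i -> BF M i S = BF M j S.
Proof. by move=> iS jS jNi; rewrite !BF_gp_ratio_par // (par_eq_of_mem jNi). Qed.

Lemma BF_neq_of_general_position (design : {set {set 'I_n}}) S i j k :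
  general_position M design -> S \in design -> i \in S -> j \in S ->
  j \notin par i -> k \in par i -> k \notin S -> BF M i S != BF M j S.
Proof.
move=> gp Sd iS jS jNi kNi kS; rewrite !BF_gp_ratio_par //.
apply: (gp S Sd _ _ _ _ (par_internal i) (par_internal j)).
- by case=> par_ij; move: jNi; rewrite par_ij mem_par.
- by apply/set0Pn; exists i; rewrite inE mem_par iS.
- by apply/set0Pn; exists j; rewrite inE mem_par jS.
- apply/orP; left; rewrite properE subsetIl /=; apply/subsetPn; exists k => //.
  by rewrite inE (negbTE kS) andbF.
Qed.

End NestedLogitBoostFactor.

Theorem propositionD1 (R : realType) (n : nat) (M : nlmodel R n)
  (b : nat) (sigma : 'I_n -> {ffun 'I_(up_log b n) -> 'I_b}) :
  (2 <= n)%N -> (2 <= b)%N -> injective sigma ->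
  nl_valid M ->
  general_position M (design sigma) ->
  forall S, S \in design sigma ->
  forall i j, i \in S -> j \in S ->
    (* (I): j is a child of N^par(i) = a_{d-1}(i) *)
    (j \in nl_blk M (nl_d M).-1 i -> BF M i S = BF M j S) /\
    (* (II) *)
    (j \notin nl_blk M (nl_d M).-1 i ->
     (exists2 k, k \in nl_blk M (nl_d M).-1 i & k \notin S) ->
     BF M i S != BF M j S).
Proof.
move=> _ _ _ valid gp S Sd i j iS jS; split.
  exact: (BF_eq_siblings valid iS jS).
move=> jNi [k kNi kS].
exact: (BF_neq_of_general_position valid gp Sd iS jS jNi kNi kS).
Qed.
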